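(* For formulas $S_1,S_2$, the equality $\emptyset[S_1,S_2]=\emptyset[S_2]$ holds if and only if at least one of the following holds: (1) $S_1$ is inconsistent; (2) $S_1$ is tautological; (3) $S_1$ is equivalent to $S_2$; (4) $S_1$ is equivalent to $\neg S_2$.
   Context: Propositional models are truth assignments over a finite set of variables; a formula used where a set of models is expected stands for its set of models. A doxastic state is a sequence $[C(0),\ldots,C(k)]$ of nonempty, pairwise disjoint sets of models covering all models. The flat doxastic state $\emptyset$ is $[\text{all models}]$. Lexicographic revision: $C\,\mathrm{lex}(A) = [C(0)\cap A,\ldots,C(k)\cap A, C(0)\setminus A,\ldots,C(k)\setminus A]$, empty sets discarded. $\emptyset[S_1,\ldots,S_m]$ denotes $\emptyset$ revised lexicographically by $S_1$, then $S_2$, ..., then $S_m$. *)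

From mathcomp Require Import all_boot.
Set Implicit Arguments. Unset Strict Implicit. Unset Printing Implicit Defensive.

Definition model (n : nat) := {ffun 'I_n -> bool}.

Inductive form (n : nat) : Type :=
| FVar of 'I_n
| FTop : form n
| FBot
| FNeg of form n
| FAnd of form n & form n
| FOr of form n & form n
| FImp of form n & form n.

Fixpoint eval (n : nat) (m : model n) (f : form n) : bool :=
  match f with
  | FVar i => m i
  | FTop => true
  | FBot => false
  | FNeg g => ~~ eval m g
  | FAnd g h => eval m g && eval m h
  | FOr g h => eval m g || eval m h
  | FImp g h => eval m g ==> eval m h
  end.

Definition mods (n : nat) (f : form n) : {set model n} := [set m | eval m f].

Definition inconsistent (n : nat) (f : form n) : Prop := mods f = set0.
Definition tautological (n : nat) (f : form n) : Prop := mods f = setT.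
Definition equivalent (n : nat) (f g : form n) : Prop := mods f = mods g.

(* Doxastic state: sequence [C(0),...,C(k)] of sets of models *)
Definition dstate (n : nat) := seq {set model n}.

Definition flat (n : nat) : dstate n := [:: [set: model n]].

Definition lex (n : nat) (C : dstate n) (A : {set model n}) : dstate n :=
  [seq X <- [seq Y :&: A | Y <- C] ++ [seq Y :\: A | Y <- C] | X != set0].

Definition revise (n : nat) (C : dstate n) (Ss : seq (form n)) : dstate n :=
  foldl (fun D S => lex D (mods S)) C Ss.

(* Revising the flat state by A and then by B yields the nonempty ones among
   A :&: B, ~: A :&: B, A :\: B, ~: A :\: B, while revising by B alone yields
   the nonempty ones among B and ~: B.  If the two agree, the cell A :&: B,
   which lies inside B, is empty or all of B, and likewise A :\: B is empty or
   all of ~: B; as A is the union of these two cells, A is empty, B, ~: B or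
   everything.  Conversely, revising by the empty set or by all models only
   drops empty ranks, and revising by B right after B or after ~: B is the
   same as revising by B once. *)

From mathcomp Require Import all_boot.
Set Implicit Arguments.
Unset Strict Implicit.
Unset Printing Implicit Defensive.

Lemma mods_FNeg n (S : form n) : mods (FNeg S) = ~: mods S.
Proof. by apply/setP => m; rewrite !inE. Qed.

Lemma filter_map_set0 (I : Type) (T : finType) (F : I -> {set T}) :
  (forall i, F i = set0) -> forall s, [seq X <- map F s | X != set0] = [::].
Proof. by move=> F0; elim=> //= i s ->; rewrite F0 eqxx. Qed.

Lemma setDI_set0 (T : finType) (A X : {set T}) : (X :\: A) :&: A = set0.
Proof. by rewrite setDE -setIA [~: A :&: A]setIC setICr setI0. Qed.

Lemma setID_set0 (T : finType) (A X : {set T}) : (X :&: A) :\: A = set0.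
Proof. by rewrite setDIl setDv setI0. Qed.

Lemma eq_sub_in_setC_pair (T : finType) (Y Z : {set T}) :
  Z != set0 -> Z \subset Y -> Z \in [:: Y; ~: Y] -> Z = Y.
Proof.
move=> /set0Pn[x Zx] /subsetP ZY; rewrite !inE => /orP[/eqP // | /eqP ZCY].
by move: (ZY x Zx) (Zx); rewrite ZCY inE => ->.
Qed.

Section LexicographicRevision.
Variable n : nat.
Implicit Types (A B X : {set model n}) (C : dstate n).

Lemma lex_cat C A : lex C A =
  [seq X <- map (@setI _ ^~ A) C | X != set0] ++
  [seq X <- map (@setD _ ^~ A) C | X != set0].
Proof. exact: filter_cat. Qed.

Lemma lex_filter0 C A : lex [seq X <- C | X != set0] A = lex C A.
Proof.
rewrite /lex !filter_cat !filter_map -!filter_predI.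
by congr (_ ++ _); congr map; apply: eq_filter => X /=;
  case: (eqVneq X set0) => [->|]; rewrite ?set0I ?set0D ?eqxx ?andbT.
Qed.

Lemma lex0 C : lex C set0 = [seq X <- C | X != set0].
Proof.
rewrite lex_cat filter_map_set0 => [|X]; last exact: setI0.
by rewrite (eq_map (g := id)) ?map_id // => X; rewrite setD0.
Qed.

Lemma lexT C : lex C setT = [seq X <- C | X != set0].
Proof.
rewrite lex_cat [X in _ ++ X]filter_map_set0 => [|X]; last exact: setDT.
by rewrite cats0 (eq_map (g := id)) ?map_id // => X; rewrite setIT.
Qed.

Lemma lex_idem C A : lex (lex C A) A = lex C A.
Proof.
rewrite lex_filter0 lex_cat !map_cat !filter_cat -!map_comp.
rewrite !(filter_map_set0 (setID_set0 A)) !(filter_map_set0 (setDI_set0 A)).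
rewrite cats0 cat0s lex_cat; congr (_ ++ _); congr filter; apply: eq_map => X /=.
  by rewrite -setIA setIid.
by rewrite setDDl setUid.
Qed.

Lemma lexCl C A : lex (lex C (~: A)) A = lex C A.
Proof.
rewrite lex_filter0.
have -> : map (@setI _ ^~ (~: A)) C = map (@setD _ ^~ A) C.
  by apply: eq_map => X; rewrite setDE.
have -> : map (@setD _ ^~ (~: A)) C = map (@setI _ ^~ A) C.
  by apply: eq_map => X; rewrite setDE setCK.
rewrite lex_cat !map_cat !filter_cat -!map_comp.
rewrite !(filter_map_set0 (setID_set0 A)) !(filter_map_set0 (setDI_set0 A)).
rewrite cats0 cat0s lex_cat; congr (_ ++ _); congr filter; apply: eq_map => X /=.
  by rewrite -setIA setIid.
by rewrite setDDl setUid.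
Qed.

Lemma mem_lexI C A X : X \in C -> X :&: A != set0 -> X :&: A \in lex C A.
Proof. by move=> XC XA0; rewrite mem_filter XA0 mem_cat (map_f (@setI _ ^~ A)). Qed.

Lemma mem_lexD C A X : X \in C -> X :\: A != set0 -> X :\: A \in lex C A.
Proof.
by move=> XC XA0; rewrite mem_filter XA0 mem_cat (map_f (@setD _ ^~ A)) ?orbT.
Qed.

Lemma mem_lex_flat A X : X \in lex (flat n) A -> X \in [:: A; ~: A].
Proof. by rewrite mem_filter /= setTI setTD => /andP[]. Qed.

Lemma lex_lex_flat_cells A B : lex (lex (flat n) A) B = lex (flat n) B ->
  (A :&: B = set0 \/ A :&: B = B) /\ (A :\: B = set0 \/ A :\: B = ~: B).
Proof.
move=> E.
have A_in (A0 : A != set0) : A \in lex (flat n) A.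
  by rewrite -{1}[A]setTI mem_lexI ?mem_head ?setTI.
split.
  have [->|AB0] := eqVneq (A :&: B) set0; [by left | right].
  apply: (eq_sub_in_setC_pair AB0 (subsetIr _ _)).
  apply/mem_lex_flat; rewrite -E; apply: (mem_lexI _ AB0); apply: A_in.
  by apply: contraNneq AB0 => ->; rewrite set0I.
have [->|AB0] := eqVneq (A :\: B) set0; [by left | right].
apply: (eq_sub_in_setC_pair AB0); first by rewrite setDE subsetIr.
suff : A :\: B \in [:: B; ~: B] by rewrite setCK !inE orbC.
apply/mem_lex_flat; rewrite -E; apply: (mem_lexD _ AB0); apply: A_in.
by apply: contraNneq AB0 => ->; rewrite set0D.
Qed.

Lemma lex_lex_flat_eq A B :
  lex (lex (flat n) A) B = lex (flat n) B <->
  A = set0 \/ A = setT \/ A = B \/ A = ~: B.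
Proof.
split=> [/lex_lex_flat_cells[[AB|AB] [AD|AD]] | [->|[->|[->|->]]]].
- by rewrite -(setID A B) AB AD setU0; left.
- by rewrite -(setID A B) AB AD set0U; do 3 right.
- by rewrite -(setID A B) AB AD setU0; do 2 right; left.
- by rewrite -(setID A B) AB AD setUCr; right; left.
- by rewrite lex0 lex_filter0.
- by rewrite lexT lex_filter0.
- exact: lex_idem.
- exact: lexCl.
Qed.

End LexicographicRevision.

Theorem mainTheorem8 (n : nat) (S1 S2 : form n) :
  revise (flat n) [:: S1; S2] = revise (flat n) [:: S2] <->
  (inconsistent S1 \/ tautological S1 \/ equivalent S1 S2 \/
   equivalent S1 (FNeg S2)).
Proof.
rewrite /revise /inconsistent /tautological /equivalent mods_FNeg /=.
exact: lex_lex_flat_eq.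
Qed.
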